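(* Let $r>1$ and integer $K\ge2$. Let $\gamma^*(r,K,1)$ be the supremum of $\sum_{i=1}^{K-1}\frac{p^i}{\sum_{j=i}^Kp^j}$ over all $p=(p^1,\dots,p^K)$ with $p^K=1/r$, $\sum_ip^i=1$, $p^i>0$. Then $$\gamma^*(r,K,1)=(K-1)\left(1-r^{-\frac{1}{K-1}}\right),$$ and $\eta(r,K,1)=\gamma^*(r,K,1)/(1+\gamma^*(r,K,1))$.
   Context: Single item auction with one buyer whose value takes values $0<x^1<\dots<x^K$ with probabilities $p^i>0$, $\sum_ip^i=1$. Let $t(x,p)=\max\{i: i\in\arg\max_{1\le k\le K}x^k\sum_{j=k}^Kp^j\}$ (the index of the optimal posted price). The efficiency loss ratio of the revenue-optimal auction is $\mathrm{ELR}_1(x,p)=\sum_{i=1}^{t(x,p)-1}p^ix^i/\sum_{i=1}^Kp^ix^i$. $\eta(r,K,1)$ is the supremum of $\mathrm{ELR}_1(x,p)$ over all such $p$ and all $x$ with $0<x^1<\dots<x^K\le rx^1$. *)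

From HB Require Import structures.
From mathcomp Require Import all_boot all_order all_algebra.
From mathcomp Require Import all_classical all_reals all_analysis.
Set Implicit Arguments. Unset Strict Implicit. Unset Printing Implicit Defensive.
Import Order.TTheory GRing.Theory Num.Theory.
Local Open Scope classical_set_scope.
Local Open Scope ring_scope.

Section Defs.
Variable R : realType.

Definition is_sup (S : set R) (v : R) : Prop :=
  ubound S v /\ (forall u, ubound S u -> v <= u).

Definition revenue (K : nat) (x p : nat -> R) (k : nat) : R :=
  x k * \sum_(k <= j < K.+1) p j.

Definition t_opt (K : nat) (x p : nat -> R) : nat :=
  \max_(1 <= i < K.+1 | all (fun k => revenue K x p k <= revenue K x p i) (iota 1 K)) i.

Definition ELR1 (K : nat) (x p : nat -> R) : R :=
  (\sum_(1 <= i < t_opt K x p) p i * x i) / (\sum_(1 <= i < K.+1) p i * x i).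

Definition prob_vec (K : nat) (p : nat -> R) : Prop :=
  (forall i, (1 <= i <= K)%N -> 0 < p i) /\ \sum_(1 <= i < K.+1) p i = 1.

Definition values_ok (r : R) (K : nat) (x : nat -> R) : Prop :=
  0 < x 1%N /\ (forall i, (1 <= i < K)%N -> x i < x i.+1) /\ x K <= r * x 1%N.

(* the set whose supremum is eta(r,K,1) *)
Definition eta_set (r : R) (K : nat) : set R :=
  [set e | exists x p : nat -> R, values_ok r K x /\ prob_vec K p /\ e = ELR1 K x p].

Definition gamma_set (r : R) (K : nat) : set R :=
  [set g | exists p : nat -> R, prob_vec K p /\ p K = r^-1 /\
     g = \sum_(1 <= i < K) p i / \sum_(i <= j < K.+1) p j].

End Defs.

From HB Require Import structures.
From mathcomp Require Import all_boot all_order all_algebra.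
From mathcomp Require Import all_classical all_reals all_analysis.
From mathcomp Require Import ring lra zify.
Set Implicit Arguments.
Unset Strict Implicit.
Unset Printing Implicit Defensive.
Import Order.TTheory GRing.Theory Num.Theory.
Local Open Scope ring_scope.

(* Write S_i = p^i + ... + p^K.  Then p^i / S_i = 1 - S_(i+1) / S_i, and the ratios
   S_(i+1) / S_i for i < t multiply to S_t; padding them with ones to K-1 factors, AM-GM
   gives  sum_(i<t) p^i / S_i <= (K-1) (1 - q)  as soon as S_t >= q^(K-1) = 1/r, where
   q = r^(-1/(K-1)).  For t = K this is the bound on gamma_star, since S_K = p^K = 1/r.
   For the optimal price index t, the revenue x^t S_t is at least the revenue x^1 of the
   lowest price and x^t <= r x^1, whence S_t >= 1/r.  The lost welfare
   sum_(i<t) p^i x^i = sum_(i<t) (p^i / S_i) x^i S_i is then at most gamma_star times the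
   optimal revenue, which is at most the retained welfare sum_(i>=t) p^i x^i; so
   ELR_1 <= gamma_star / (1 + gamma_star).  The equal-revenue distribution S_i = q^(i-1),
   x^i = q^(1-i) makes every price optimal and attains both bounds. *)

Section RealField.
Variable R : realFieldType.

Lemma AGM_sum_ge (f : nat -> R) (c : R) m n : (m < n)%N -> 0 <= c ->
    (forall i, (m <= i < n)%N -> 0 <= f i) ->
    c ^+ (n - m) <= \prod_(m <= i < n) f i ->
  (n - m)%:R * c <= \sum_(m <= i < n) f i.
Proof.
move=> mn c0 f_ge0 c_le_prod.
have nm_gt0 : (0 < n - m)%N by rewrite subn_gt0.
have shift idx op :
    \big[op/idx]_(m <= i < n) f i = \big[op/idx]_(i < n - m) f (i + m)%N.
  by rewrite -{1}[m]add0n big_addn big_mkord.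
move: c_le_prod; rewrite shift.
have := (leif_AGM (A := predT) (E := fun i : 'I_(n - m) => f (i + m)%N) _).1.
rewrite card_ord shift => AGM c_le_prod.
have {AGM} : c ^+ (n - m) <= ((\sum_(i < n - m) f (i + m)%N) / (n - m)%:R) ^+ (n - m).
  apply: le_trans c_le_prod (AGM _) => i _; apply: f_ge0.
  by have := ltn_ord i; lia.
rewrite ler_pXn2r ?nnegrE // ?divr_ge0 ?sumr_ge0 //; last first.
  by move=> i _; apply: f_ge0; have := ltn_ord i; lia.
by move=> le_mean; rewrite mulrC -ler_pdivlMr ?ltr0n.
Qed.

Lemma div_addr_le (a b g : R) : 0 <= a -> 0 < b -> 0 <= g -> a <= g * b ->
  a / (a + b) <= g / (1 + g).
Proof.
move=> a0 b0 g0 ab.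
rewrite ler_pdivrMr; last lra.
rewrite mulrAC ler_pdivlMr; last lra.
nra.
Qed.

Section TailSums.
Variables (K : nat) (p : nat -> R).
Hypothesis p_gt0 : forall i, (1 <= i <= K)%N -> 0 < p i.

Definition tailsum i := \sum_(i <= j < K.+1) p j.

Lemma tailsumS i : (i <= K)%N -> tailsum i = p i + tailsum i.+1.
Proof. by move=> iK; rewrite /tailsum big_ltn. Qed.

Lemma tailsum_ge0 i : (1 <= i)%N -> 0 <= tailsum i.
Proof.
move=> i1; rewrite /tailsum big_nat_cond sumr_ge0 // => j /andP[/andP[ij jK] _].
by apply/ltW/p_gt0; lia.
Qed.

Lemma tailsum_gt0 i : (1 <= i <= K)%N -> 0 < tailsum i.
Proof.
move=> /andP[i1 iK]; rewrite tailsumS //.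
by rewrite ltr_wpDr ?tailsum_ge0 ?p_gt0 ?i1.
Qed.

Lemma hazard_sumE t : (t <= K.+1)%N ->
  \sum_(1 <= i < t) p i / tailsum i = \sum_(1 <= i < t) (1 - tailsum i.+1 / tailsum i).
Proof.
move=> tK; apply: eq_big_nat => i /andP[i1 it].
have S_gt0 : 0 < tailsum i by apply: tailsum_gt0; lia.
rewrite (@tailsumS i) in S_gt0 *; last lia.
by field; rewrite gt_eqF.
Qed.

Lemma prod_tail_ratio t : (1 <= t <= K)%N -> tailsum 1 = 1 ->
  \prod_(1 <= i < t) (tailsum i.+1 / tailsum i) = tailsum t.
Proof.
move=> /andP[t1 tK] S1; case: (ltngtP 1 t) t1 => // [t_gt1 _|<- _].
  rewrite telescope_prodf // ?S1 ?divr1 // => k /andP[k1 kt].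
  by rewrite gt_eqF // tailsum_gt0 //; lia.
by rewrite S1 big_geq.
Qed.

Lemma hazard_sum_le t c : (1 < K)%N -> (1 <= t <= K)%N -> tailsum 1 = 1 ->
    0 <= c -> c ^+ K.-1 <= tailsum t ->
  \sum_(1 <= i < t) p i / tailsum i <= K.-1%:R * (1 - c).
Proof.
move=> K1 /andP[t1 tK] S1 c0 c_le_S.
pose f i := if (i < t)%N then tailsum i.+1 / tailsum i else 1.
have widen (idx : R) (op : Monoid.law idx) F : \big[op/idx]_(1 <= i < t) F i =
    \big[op/idx]_(1 <= i < K) (if (i < t)%N then F i else idx).
  by rewrite (big_nat_widen _ _ _ _ _ tK) big_mkcond.
have prod_f : \prod_(1 <= i < K) f i = tailsum t.
  by rewrite -prod_tail_ratio ?t1 // widen.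
have sum_f : (K.-1%:R * c <= \sum_(1 <= i < K) f i).
  rewrite -subn1; apply: AGM_sum_ge; rewrite ?subn1 ?prod_f //.
  move=> i /andP[i1 iK]; rewrite /f; case: ifP => // it.
  by rewrite divr_ge0 // ltW // tailsum_gt0 //; lia.
rewrite hazard_sumE; last lia.
rewrite widen (eq_bigr (fun i => 1 - f i)); last first.
  by move=> i _; rewrite /f; case: ifP; rewrite ?subrr.
by rewrite sumrB sumr_const_nat subn1 -mulr_natl mulr1 mulrBr mulr1; lra.
Qed.

End TailSums.
End RealField.

Section Auction.
Variable R : realType.
Implicit Types (r : R) (x p : nat -> R).

Definition qroot r K := r `^ (- (K.-1)%:R^-1).

Definition gamma_star r K := K.-1%:R * (1 - qroot r K).

Lemma qroot_expr r K : 0 <= r -> (1 < K)%N -> qroot r K ^+ K.-1 = r^-1.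
Proof.
move=> r0 K1; rewrite /qroot -powR_mulrn ?powR_ge0 // -powRrM mulNr.
have K1_neq0 : (K.-1)%:R != 0 :> R by rewrite pnatr_eq0 -lt0n; lia.
by rewrite mulVf // powR_inv1.
Qed.

Lemma qroot_ge0 r K : 0 <= qroot r K.
Proof. exact: powR_ge0. Qed.

Lemma qroot_gt0 r K : 0 < r -> 0 < qroot r K.
Proof. exact: powR_gt0. Qed.

Lemma qroot_lt1 r K : 1 < r -> (1 < K)%N -> qroot r K < 1.
Proof.
move=> r1 K1; rewrite -(@expr_lt1 _ K.-1) ?qroot_ge0 //; last lia.
by rewrite qroot_expr ?invf_lt1 //; lra.
Qed.

Lemma gamma_star_ge0 r K : 1 < r -> (1 < K)%N -> 0 <= gamma_star r K.
Proof.
by move=> r1 K1; rewrite mulr_ge0 // subr_ge0 ltW // qroot_lt1.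
Qed.

Lemma hazard_sum_le_gamma_star r K p t : 1 < r -> (1 < K)%N -> prob_vec K p ->
    (1 <= t <= K)%N -> r^-1 <= tailsum K p t ->
  \sum_(1 <= i < t) p i / tailsum K p i <= gamma_star r K.
Proof.
move=> r1 K1 [p_gt0 p_sum1] t_range r_le_S.
apply: hazard_sum_le; rewrite ?qroot_ge0 ?qroot_expr //; lra.
Qed.

Lemma gamma_set_le r K : 1 < r -> (1 < K)%N -> ubound (gamma_set r K) (gamma_star r K).
Proof.
move=> r1 K1 _ [p [p_prob [pK ->]]].
apply: hazard_sum_le_gamma_star; rewrite // ?leqnn ?andbT; first lia.
by rewrite /tailsum big_nat1 pK.
Qed.

Lemma exists_argmax_nat (f : nat -> R) K : (0 < K)%N ->
  exists2 i, (1 <= i <= K)%N & forall k, (1 <= k <= K)%N -> f k <= f i.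
Proof.
move=> K_gt0.
case: (@arg_maxP _ _ _ (@Ordinal K 0 K_gt0) predT (fun i : 'I_K => f i.+1)) => // i _ i_max.
exists i.+1; first exact: ltn_ord.
move=> k /andP[k1 kK]; have k_lt : (k.-1 < K)%N by lia.
by have := i_max (@Ordinal K _ k_lt) isT; rewrite /= prednK.
Qed.

Lemma leq_t_opt K x p i : (1 <= i <= K)%N ->
    (forall k, (1 <= k <= K)%N -> revenue K x p k <= revenue K x p i) ->
  (i <= t_opt K x p)%N.
Proof.
move=> i_range i_max; apply: leq_bigmax_seq; first by rewrite mem_index_iota ltnS.
by apply/allP => k; rewrite mem_iota add1n ltnS; exact: i_max.
Qed.

Lemma t_opt_spec K x p : (0 < K)%N ->
  (1 <= t_opt K x p <= K)%N /\
  forall k, (1 <= k <= K)%N -> revenue K x p k <= revenue K x p (t_opt K x p).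
Proof.
move=> K_gt0.
have [i0 i0_range /(leq_t_opt i0_range)] := exists_argmax_nat (revenue K x p) K_gt0.
set P := fun i => all (fun k => revenue K x p k <= revenue K x p i) (iota 1 K).
have : (t_opt K x p == 0)%N || P (t_opt K x p) && (1 <= t_opt K x p <= K)%N.
  rewrite /t_opt big_seq_cond.
  apply: (big_ind (fun m => (m == 0)%N || P m && (1 <= m <= K)%N)) => //.
    by move=> a b; rewrite /maxn; case: ifP.
  move=> i /andP[]; rewrite mem_index_iota ltnS => i_range P_i.
  by apply/orP; right; apply/andP.
case/orP => [/eqP -> | /andP[/allP t_max t_range] _]; first by case/andP: i0_range; lia.
by split=> // k k_range; apply: t_max; rewrite mem_iota add1n ltnS.
Qed.

Lemma values_ok_le r K x i j : values_ok r K x -> (1 <= i)%N -> (i <= j <= K)%N ->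
  x i <= x j.
Proof.
move=> [_ [x_incr _]] i1 /andP[ij jK].
pose D := [pred k | (1 <= k <= K)%N].
have x_homo : {in D &, {homo x : a b / (a <= b)%N >-> a <= b}}.
  apply: homo_leq_in; [exact: lexx | exact: le_trans | |].
    by move=> a b a_in b_in c ac; rewrite !inE in a_in b_in *; lia.
  by move=> a a_in a1_in; rewrite !inE in a_in a1_in; apply/ltW/x_incr; lia.
by apply: x_homo; rewrite ?inE //; lia.
Qed.

Lemma values_ok_gt0 r K x i : values_ok r K x -> (1 <= i <= K)%N -> 0 < x i.
Proof.
move=> x_ok /andP[i1 iK].
by apply: lt_le_trans x_ok.1 (values_ok_le x_ok _ _); rewrite ?i1 ?iK.
Qed.

Lemma prob_vec_gt0 K p : prob_vec K p -> (0 < K)%N.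
Proof.
move=> [_]; case: K => // /esym/eqP.
by rewrite big_geq // oner_eq0.
Qed.

Section EfficiencyLoss.
Variables (r : R) (K : nat) (x p : nat -> R).
Hypotheses (x_ok : values_ok r K x) (p_prob : prob_vec K p).
Let t := t_opt K x p.
Let K_gt0 := prob_vec_gt0 p_prob.

Lemma tailsum_t_opt_ge : r^-1 <= tailsum K p t.
Proof.
have [t_range t_max] := t_opt_spec x p K_gt0.
have [x1_gt0 [_ xK_le]] := x_ok.
have xt_gt0 : 0 < x t := values_ok_gt0 x_ok t_range.
have r_gt0 : 0 < r.
  rewrite -(pmulr_lgt0 _ x1_gt0) (lt_le_trans _ xK_le) //.
  by rewrite (values_ok_gt0 x_ok) ?leqnn ?K_gt0.
have x1_le : x 1%N <= x t * tailsum K p t.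
  by have := t_max 1%N; rewrite /revenue p_prob.2 mulr1; apply; lia.
have : x t <= r * (x t * tailsum K p t).
  apply: le_trans (values_ok_le x_ok _ _) (le_trans xK_le (ler_wpM2l (ltW r_gt0) x1_le)); lia.
by rewrite mulrCA ler_pMr // -[r^-1]mulr1 ler_pdivrMl.
Qed.

Lemma lost_welfare_le :
  \sum_(1 <= i < t) p i * x i <=
    (\sum_(1 <= i < t) p i / tailsum K p i) * revenue K x p t.
Proof.
have [t_range t_max] := t_opt_spec x p K_gt0.
rewrite mulr_suml; apply: ler_sum_nat => i /andP[i1 it].
have i_range : (1 <= i <= K)%N by lia.
have S_gt0 := tailsum_gt0 p_prob.1 i_range.
have -> : p i * x i = p i / tailsum K p i * revenue K x p i.
  by rewrite /revenue -/(tailsum K p i); field; rewrite gt_eqF.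
by rewrite ler_wpM2l ?t_max // divr_ge0 // ltW // p_prob.1.
Qed.

Lemma revenue_le_welfare k : (1 <= k <= K)%N ->
  revenue K x p k <= \sum_(k <= i < K.+1) p i * x i.
Proof.
move=> /andP[k1 kK]; rewrite /revenue big_distrr /=.
apply: ler_sum_nat => i /andP[ki iK]; rewrite mulrC ler_wpM2l ?(values_ok_le x_ok) ?ki //.
by rewrite ltW // p_prob.1 //; lia.
Qed.

End EfficiencyLoss.

Lemma ELR1_le_gamma_star r K x p : 1 < r -> (1 < K)%N ->
    values_ok r K x -> prob_vec K p ->
  ELR1 K x p <= gamma_star r K / (1 + gamma_star r K).
Proof.
move=> r1 K1 x_ok p_prob; have K_gt0 : (0 < K)%N by lia.
have [t_range _] := t_opt_spec x p K_gt0.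
have gamma_ge0 := gamma_star_ge0 r1 K1.
rewrite /ELR1 [X in _ / X](@big_cat_nat _ _ _ (t_opt K x p)) /=; try lia.
have rev_gt0 : 0 < revenue K x p (t_opt K x p).
  by rewrite mulr_gt0 ?(values_ok_gt0 x_ok) ?(tailsum_gt0 p_prob.1).
apply: div_addr_le => //.
- rewrite big_nat_cond sumr_ge0 // => i /andP[i_range _].
  by rewrite mulr_ge0 // ltW ?p_prob.1 ?(values_ok_gt0 x_ok) //; lia.
- exact: lt_le_trans rev_gt0 (revenue_le_welfare x_ok p_prob t_range).
apply: le_trans (lost_welfare_le x p_prob) _.
apply: le_trans (ler_wpM2l gamma_ge0 (revenue_le_welfare x_ok p_prob t_range)).
apply: ler_wpM2r; first exact: ltW.
exact: hazard_sum_le_gamma_star (tailsum_t_opt_ge x_ok p_prob).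
Qed.

(* Every posted price earns revenue 1; ties go to the highest price, so t = K and the
   whole welfare below x^K is lost. *)
Section EqualRevenue.
Variables (r : R) (K : nat).
Hypotheses (r1 : 1 < r) (K1 : (1 < K)%N).
Let q := qroot r K.
Let r_gt0 : 0 < r. Proof. exact: lt_trans ltr01 r1. Qed.
Let q_gt0 : 0 < q. Proof. exact: qroot_gt0. Qed.
Let q_lt1 : q < 1. Proof. exact: qroot_lt1. Qed.
Let qK : q ^+ K.-1 = r^-1. Proof. exact: qroot_expr (ltW r_gt0) K1. Qed.

Definition eqrev_prob i := if (i < K)%N then q ^+ i.-1 * (1 - q) else q ^+ K.-1.

Definition eqrev_value i := (q ^+ i.-1)^-1.

Lemma tailsum_eqrev i : (1 <= i <= K)%N -> tailsum K eqrev_prob i = q ^+ i.-1.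
Proof.
move=> /andP[i1 iK]; rewrite /tailsum big_nat_recr //= {2}/eqrev_prob ltnn.
rewrite (@telescope_sumr_eq _ _ _ (fun j => - q ^+ j.-1)) //; first by ring.
move=> k /andP[ik kK]; rewrite /eqrev_prob kK /=.
have -> : k = k.-1.+1 by lia.
by rewrite /= exprS; ring.
Qed.

Lemma eqrev_prob_vec : prob_vec K eqrev_prob.
Proof.
split; last by rewrite -/(tailsum K _ 1) tailsum_eqrev ?expr0 //; lia.
move=> i _; rewrite /eqrev_prob; case: ifP => _; last exact: exprn_gt0.
by rewrite mulr_gt0 ?exprn_gt0 ?subr_gt0.
Qed.

Lemma gamma_star_in_gamma_set : gamma_set r K (gamma_star r K).
Proof.
exists eqrev_prob; split; first exact: eqrev_prob_vec.
split; first by rewrite /eqrev_prob ltnn.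
rewrite (eq_big_nat _ _ (F2 := fun=> 1 - q)); last first.
  move=> i /andP[i1 iK]; rewrite -/(tailsum K eqrev_prob i) tailsum_eqrev; last lia.
  by rewrite /eqrev_prob iK mulrC mulKf // expf_neq0 // gt_eqF.
by rewrite sumr_const_nat subn1 -mulr_natl.
Qed.

Lemma eqrev_values_ok : values_ok r K eqrev_value.
Proof.
split; first by rewrite /eqrev_value expr0 invr1.
split; last by rewrite /eqrev_value qK invrK expr0 invr1 mulr1.
move=> i /andP[i1 iK]; rewrite /eqrev_value ltf_pV2 ?posrE ?exprn_gt0 //.
have -> : i.+1.-1 = i.-1.+1 by lia.
by rewrite exprS gtr_pMl ?exprn_gt0.
Qed.

Lemma revenue_eqrev k : (1 <= k <= K)%N -> revenue K eqrev_value eqrev_prob k = 1.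
Proof.
move=> k_range; rewrite /revenue -/(tailsum K _ k) tailsum_eqrev //.
by rewrite mulVf // expf_neq0 // gt_eqF.
Qed.

Lemma t_opt_eqrev : t_opt K eqrev_value eqrev_prob = K.
Proof.
have [/andP[_ tK] _] := t_opt_spec eqrev_value eqrev_prob (ltnW K1).
apply/eqP; rewrite eqn_leq tK leq_t_opt ?leqnn ?(ltnW K1) // => k k_range.
by rewrite !revenue_eqrev // leqnn ltnW.
Qed.

Lemma eta_star_in_eta_set : eta_set r K (gamma_star r K / (1 + gamma_star r K)).
Proof.
exists eqrev_value, eqrev_prob; split; first exact: eqrev_values_ok.
split; first exact: eqrev_prob_vec.
have loss_i i : (1 <= i < K)%N -> eqrev_prob i * eqrev_value i = 1 - q.
  move=> /andP[i1 iK]; rewrite /eqrev_prob /eqrev_value iK mulrAC mulfV ?mul1r //.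
  by rewrite expf_neq0 // gt_eqF.
have loss : \sum_(1 <= i < K) eqrev_prob i * eqrev_value i = gamma_star r K.
  by rewrite (eq_big_nat _ _ loss_i) sumr_const_nat subn1 -mulr_natl.
rewrite /ELR1 t_opt_eqrev loss big_nat_recr /=; last lia.
rewrite loss /eqrev_prob ltnn /eqrev_value qK mulfV; first by rewrite addrC.
by rewrite invr_eq0 gt_eqF.
Qed.

End EqualRevenue.
End Auction.

Theorem proposition7 (R : realType) (r : R) (K : nat) (hr : 1 < r) (hK : (2 <= K)%N) :
  is_sup (gamma_set r K) ((K.-1)%:R * (1 - r `^ (- ((K.-1)%:R)^-1))) /\
  is_sup (eta_set r K)
    ((K.-1)%:R * (1 - r `^ (- ((K.-1)%:R)^-1)) /
     (1 + (K.-1)%:R * (1 - r `^ (- ((K.-1)%:R)^-1)))).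
Proof.
change ((K.-1)%:R * (1 - r `^ (- ((K.-1)%:R)^-1))) with (gamma_star r K).
split; split.
- exact: gamma_set_le.
- by move=> u /(_ _ (gamma_star_in_gamma_set hr hK)).
- by move=> _ [x [p [x_ok [p_prob ->]]]]; exact: ELR1_le_gamma_star.
- by move=> u /(_ _ (eta_star_in_eta_set hr hK)).
Qed.
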